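(* Let $n=p_1p_2\cdots p_r$, where $r\geq 3$ and $p_1<p_2<\cdots<p_r$ are primes, and let $3\leq s\leq r$. Then $\deg(p_{s-1}p_s\cdots p_r)\geq\deg(p_sp_{s+1}\cdots p_r)$ in $\mathcal{P}(C_n)$ if and only if $$p_sp_{s+1}\cdots p_r\geq\left(\frac{p_1p_2\cdots p_{s-2}}{\phi(p_1p_2\cdots p_{s-2})}-1\right)\phi(p_{s-1})+1. \qquad ( * )$$ Further, $\deg(p_{s-1}p_s\cdots p_r)=\deg(p_sp_{s+1}\cdots p_r)$ if and only if equality holds in $( * )$.
   Context: For a finite group $G$, the power graph $\mathcal{P}(G)$ is the simple undirected graph with vertex set $G$ in which two distinct vertices are adjacent if one is an integral power of the other. $C_n$ denotes the cyclic group of order $n$, identified with $\mathbb{Z}_n=\{0,1,\ldots,n-1\}$, so a positive divisor $d<n$ of $n$ is regarded as the element $d\in\mathbb{Z}_n$. $\deg(a)$ is the degree of vertex $a$ in $\mathcal{P}(C_n)$ and $\phi$ is Euler's totient function. *)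

From mathcomp Require Import all_boot all_order all_algebra.
Set Implicit Arguments. Unset Strict Implicit. Unset Printing Implicit Defensive.

(* C_n is identified with Z_n = {0,...,n-1} (type 'I_n), written additively.
   An "integral power" x^k of x is then k*x mod n; since this only depends on
   k mod n, it suffices to let k range over 0..n-1 (this covers all k in Z). *)
Definition is_power (n : nat) (x y : 'I_n) : bool :=
  [exists k : 'I_n, nat_of_ord y == (k * x) %% n].

Definition pg_adj (n : nat) (x y : 'I_n) : bool :=
  (x != y) && (is_power x y || is_power y x).

Definition pg_deg (n a : nat) : nat :=
  #|[set y : 'I_n | [exists x : 'I_n, (nat_of_ord x == a %% n) && pg_adj x y]]|.

From mathcomp Require Import all_boot all_order all_algebra.
From mathcomp Require Import ring zify.
Import Order.TTheory GRing.Theory Num.Theory.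

(* In Z_n the powers of x are the multiples of gcd(x, n).  Hence, if n = a m with
   a, m coprime, the neighbours of a in P(C_n) are its m multiples together with
   the a phi(m) residues y coprime to m (those with gcd(y, n) | a), minus the
   phi(m) residues counted twice and a itself, so
   deg a = m + (a - 1) phi(m) - 1.  With P = p_1...p_(s-2), q = p_(s-1) and
   B = p_s...p_r, taking (a, m) = (qB, P) and (B, Pq) gives
   deg(qB) - deg(B) = phi(P) (B - rhs), where rhs is the right side of ( * ). *)

Lemma is_powerE n (x y : 'I_n) : is_power x y = (gcdn x n %| y).
Proof.
have n_gt0 : 0 < n by apply: leq_ltn_trans (ltn_ord x).
apply/existsP/idP => [[k /eqP ->]|g_y].
  have g_kx : gcdn x n %| k * x by rewrite dvdn_mull // dvdn_gcdl.
  by rewrite -(dvdn_addr _ (dvdn_mull (k * x %/ n) (dvdn_gcdr x n))) -divn_eq.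
have [x0|x_gt0] := posnP x.
  have y0 : nat_of_ord y = 0.
    by apply/eqP; rewrite -(modn_small (ltn_ord y)); move: g_y; rewrite x0 gcd0n.
  by exists x; rewrite x0 y0 muln0 mod0n.
have [u v uxE _] := egcdnP n x_gt0.
exists (Ordinal (ltn_pmod (u * (y %/ gcdn x n)) n_gt0)); apply/eqP => /=.
by rewrite modnMml mulnAC uxE mulnDl mulnAC modnMDl mulnC divnK // modn_small.
Qed.

Lemma gcdn_mul_coprime_dvd y a m :
  coprime a m -> (gcdn y (a * m) %| a) = coprime y m.
Proof.
move=> co_am; apply/idP/idP => [g_a|co_ym]; last by rewrite Gauss_gcdl // dvdn_gcdr.
have g_ym : gcdn y m %| gcdn a m.
  rewrite dvdn_gcd dvdn_gcdr andbT (dvdn_trans _ g_a) //.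
  by rewrite dvdn_gcd dvdn_gcdl dvdn_mull ?dvdn_gcdr.
by move: g_ym; rewrite (eqP co_am) dvdn1.
Qed.

Lemma pg_deg_gcd n a : a < n ->
  pg_deg n a = \sum_(0 <= y < n) ((y != a) && ((gcdn a n %| y) || (gcdn y n %| a))).
Proof.
move=> a_lt_n; rewrite /pg_deg big_mkord -sum1_card big_mkcond /=.
apply: eq_bigr => y _; rewrite inE.
have -> : [exists x : 'I_n, (nat_of_ord x == a %% n) && pg_adj x y]
          = pg_adj (Ordinal a_lt_n) y.
  apply/existsP/idP => [[x /andP[/eqP xE]]|adj_y]; last first.
    by exists (Ordinal a_lt_n); rewrite /= modn_small ?eqxx.
  by rewrite (_ : x = Ordinal a_lt_n) //; apply: val_inj; rewrite /= xE modn_small.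
by rewrite /pg_adj !is_powerE eq_sym.
Qed.

Lemma sum_nat_blocks k m (F : nat -> nat) :
  \sum_(0 <= y < k * m) F y = \sum_(0 <= t < k) \sum_(0 <= j < m) F (t * m + j).
Proof.
rewrite big_nat_mul; apply: eq_bigr => t _.
rewrite -{1}[t * m]add0n big_addn mulSn addnK.
by apply: eq_bigr => j _; rewrite addnC.
Qed.

Lemma sum_coprime_range k m : \sum_(0 <= y < k * m) coprime y m = k * totient m.
Proof.
rewrite sum_nat_blocks (eq_bigr (fun=> totient m)) ?sum_nat_const_nat ?subn0 //.
move=> t _; rewrite totient_count_coprime; apply: eq_bigr => j _.
by rewrite -coprime_modl modnMDl coprime_modl coprime_sym.
Qed.

Lemma sum_dvdn_range a m (g : pred nat) : 0 < a ->
  \sum_(0 <= y < m * a) ((a %| y) && g y) = \sum_(0 <= t < m) g (t * a).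
Proof.
move=> a_gt0; rewrite sum_nat_blocks; apply: eq_bigr => t _.
rewrite big_ltn // addn0 dvdn_mull //= big_nat_cond big1 ?addn0 //.
move=> j /andP[/andP[j_gt0 j_lt_a] _].
by rewrite dvdn_addr ?dvdn_mull // gtnNdvd.
Qed.

Lemma pg_deg_coprime_cofactor a m : 0 < a -> coprime a m -> 1 < m ->
  pg_deg (a * m) a + totient m + 1 = m + a * totient m.
Proof.
move=> a_gt0 co_am m_gt1; set n := a * m.
have a_lt_n : a < n by rewrite -[X in X < _]muln1 ltn_pmul2l.
pose R y := (a %| y) || coprime y m.
have degE : pg_deg n a = \sum_(0 <= y < n) ((y != a) && R y).
  rewrite pg_deg_gcd // (gcdn_idPl (dvdn_mulr m (dvdnn a))).
  by apply: eq_bigr => y _; rewrite gcdn_mul_coprime_dvd.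
have sumR : \sum_(0 <= y < n) R y = 1 + pg_deg n a.
  rewrite degE (bigD1_seq a) ?iota_uniq //=; last by rewrite mem_iota subn0.
  rewrite {1}/R dvdnn big_mkcond /=.
  by congr (_ + _); apply: eq_bigr => y _; case: (y != a).
have incl_excl : \sum_(0 <= y < n) R y + \sum_(0 <= y < n) ((a %| y) && coprime y m)
               = \sum_(0 <= y < n) (a %| y) + \sum_(0 <= y < n) coprime y m.
  rewrite -!big_split; apply: eq_bigr => y _ /=.
  by rewrite /R; case: (a %| y); case: (coprime y m).
have multiples : \sum_(0 <= y < n) (a %| y) = m.
  transitivity (\sum_(0 <= y < m * a) ((a %| y) && predT y)).
    by rewrite /n mulnC; apply: eq_bigr => y _; rewrite andbT.
  by rewrite sum_dvdn_range // sum_nat_const_nat subn0 muln1.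
have both : \sum_(0 <= y < n) ((a %| y) && coprime y m) = totient m.
  rewrite /n mulnC sum_dvdn_range // totient_count_coprime.
  by apply: eq_bigr => t _; rewrite coprimeMl co_am andbT coprime_sym.
move: incl_excl; rewrite sumR multiples both sum_coprime_range.
lia.
Qed.

Section IncreasingPrimes.

Variables (r : nat) (p : nat -> nat).
Hypothesis p_prime : forall i, 1 <= i <= r -> prime (p i).
Hypothesis p_incr : forall i, 1 <= i < r -> p i < p i.+1.

Lemma ltn_incr_primes i j : 1 <= i -> i < j <= r -> p i < p j.
Proof.
move=> i_ge1 /andP[lt_ij j_le_r].
pose D := [pred k | 1 <= k <= r].
apply: (@homo_ltn_in _ D p (fun u v => u < v)) => //; first exact: ltn_trans.
- by move=> u v; rewrite !inE => u_in v_in k; rewrite inE; lia.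
- by move=> k; rewrite !inE => k_in Sk_in; apply: p_incr; lia.
- by rewrite inE i_ge1; lia.
- by rewrite inE j_le_r; lia.
Qed.

Lemma coprime_incr_primes i j : 1 <= i -> i < j <= r -> coprime (p i) (p j).
Proof.
move=> i_ge1 ij; have lt_pij : p i < p j by apply: ltn_incr_primes.
have [pi_prime pj_prime] : prime (p i) /\ prime (p j) by split; apply: p_prime; lia.
by rewrite prime_coprime // dvdn_prime2 // (ltn_eqF lt_pij).
Qed.

Lemma coprime_prod_incr_primes a b c : 1 <= a -> c <= r.+1 ->
  coprime (\prod_(a <= i < b) p i) (\prod_(b <= j < c) p j).
Proof.
move=> a_ge1 c_le; rewrite big_nat_cond.
apply: (big_ind (fun x => coprime x _)) => [|u v|i /andP[/andP[a_i i_b] _]].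
- exact: coprime1n.
- by rewrite coprimeMl => -> ->.
rewrite big_nat_cond.
apply: (big_ind (coprime _)) => [|u v|j /andP[/andP[b_j j_c] _]].
- exact: coprimen1.
- by rewrite coprimeMr => -> ->.
by apply: coprime_incr_primes; lia.
Qed.

Lemma prod_incr_primes_gt0 a b : 1 <= a -> b <= r.+1 -> 0 < \prod_(a <= i < b) p i.
Proof.
move=> a_ge1 b_le; rewrite big_nat_cond; apply: prodn_cond_gt0 => i /andP[i_in _].
by apply/prime_gt0/p_prime; lia.
Qed.

Lemma prod_incr_primes_gt1 a b : 1 <= a < b -> b <= r.+1 -> 1 < \prod_(a <= i < b) p i.
Proof.
move=> /andP[a_ge1 a_lt_b] b_le; rewrite big_ltn //.
have pa_gt1 : 1 < p a by apply/prime_gt1/p_prime; lia.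
by rewrite (leq_trans pa_gt1) // leq_pmulr // prod_incr_primes_gt0 //; lia.
Qed.

End IncreasingPrimes.

Lemma degree_gap (R : fieldType) (x y P B f q : R) : (f != 0)%R ->
  (x + f + 1 = P + q * B * f)%R ->
  (y + f * (q - 1) + 1 = P * q + B * (f * (q - 1)))%R ->
  (x - y = f * (B - ((P / f - 1) * (q - 1) + 1)))%R.
Proof.
move=> f_neq0 xE yE.
have -> : x = (P + q * B * f - f - 1)%R by rewrite -xE; ring.
have -> : y = (P * q + B * (f * (q - 1)) - f * (q - 1) - 1)%R by rewrite -yE; ring.
by field.
Qed.

Lemma pg_deg_gap (R : numFieldType) P q B :
  1 < P -> prime q -> 0 < B -> coprime P q -> coprime (P * q) B ->
  ((pg_deg (P * q * B) (q * B))%:R - (pg_deg (P * q * B) B)%:R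
   = (totient P)%:R * (B%:R - ((P%:R / (totient P)%:R - 1) * (totient q)%:R + 1)) :> R)%R.
Proof.
move=> P_gt1 q_prime B_gt0 co_Pq co_PqB.
have q_gt0 := prime_gt0 q_prime.
have co_P_qB : coprime P (q * B).
  by rewrite coprimeMr co_Pq; move: co_PqB; rewrite coprimeMl => /andP[].
have degA : pg_deg (P * q * B) (q * B) + totient P + 1 = P + q * B * totient P.
  by rewrite -mulnA mulnC pg_deg_coprime_cofactor ?muln_gt0 ?q_gt0 // coprime_sym.
have degB : pg_deg (P * q * B) B + totient P * q.-1 + 1 = P * q + B * (totient P * q.-1).
  have Pq_gt1 : 1 < P * q by rewrite (leq_trans P_gt1) ?leq_pmulr.
  by rewrite mulnC -totient_prime // -totient_coprime // pg_deg_coprime_cofactor // coprime_sym.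
have q1E : (q.-1%:R = q%:R - 1 :> R)%R by rewrite -subn1 natrB.
rewrite (totient_prime q_prime) q1E; apply: degree_gap.
- by rewrite pnatr_eq0 -lt0n totient_gt0 ltnW.
- by move/(congr1 (fun k => k%:R%R : R)): degA; rewrite !natrD !natrM.
- by move/(congr1 (fun k => k%:R%R : R)): degB; rewrite !natrD !natrM q1E.
Qed.

Theorem lemma3p2 (r s : nat) (p : nat -> nat)
  (hr : 3 <= r)
  (hprime : forall i, 1 <= i <= r -> prime (p i))
  (hinc : forall i, 1 <= i < r -> p i < p i.+1)
  (hs : 3 <= s <= r) :
  let n := \prod_(1 <= i < r.+1) p i in
  let A := \prod_(s.-1 <= i < r.+1) p i in
  let B := \prod_(s <= i < r.+1) p i in
  let P := \prod_(1 <= i < s.-1) p i in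
  let rhs : rat :=
    ((P%:R / (totient P)%:R - 1) * (totient (p s.-1))%:R + 1)%R in
  (pg_deg n B <= pg_deg n A <-> (rhs <= (B%:R : rat))%R) /\
  (pg_deg n A = pg_deg n B <-> (B%:R : rat) = rhs).
Proof.
move=> n A B P rhs; case/andP: hs => s_ge3 s_le_r.
set q := p s.-1.
have coprime_seg := @coprime_prod_incr_primes r p hprime hinc.
have q_prime : prime q by apply: hprime; lia.
have AE : A = q * B by rewrite /A big_ltn ?prednK //; lia.
have PqE : P * q = \prod_(1 <= i < s) p i.
  have sE : s = s.-1.+1 by lia.
  by rewrite [in RHS]sE big_nat_recr //; lia.
have nE : n = P * q * B by rewrite PqE /n /B -big_cat_nat //; lia.
have P_gt1 : 1 < P by apply: (@prod_incr_primes_gt1 r p hprime); lia.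
have B_gt0 : 0 < B by apply: (@prod_incr_primes_gt0 r p hprime); lia.
have co_PA : coprime P A by apply: coprime_seg; lia.
have co_Pq : coprime P q by move: co_PA; rewrite AE coprimeMr => /andP[].
have co_PqB : coprime (P * q) B by rewrite PqE; apply: coprime_seg; lia.
have f_gt0 : (0 < (totient P)%:R :> rat)%R by rewrite ltr0n totient_gt0 ltnW.
have gap := pg_deg_gap rat _ _ _ P_gt1 q_prime B_gt0 co_Pq co_PqB.
rewrite -AE -nE -/q -/rhs in gap.
split; first by rewrite -(ler_nat rat) -subr_ge0 gap pmulr_rge0 // subr_ge0.
split=> [AB|B_rhs]; apply/eqP.
- have : ((totient P)%:R * (B%:R - rhs) == 0 :> rat)%R by rewrite -gap AB subrr.
  by rewrite mulf_eq0 (gt_eqF f_gt0) subr_eq0.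
- by rewrite -(eqr_nat rat) -subr_eq0 gap B_rhs subrr mulr0.
Qed.
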